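(* Let $T$ be a nonabelian finite simple group and let $A,B,C$ be pairwise distinct proper subgroups of $T$ forming a strong multiple factorisation, i.e. $T=A(B\cap C)=B(C\cap A)=C(A\cap B)$. Let $M=T^3$, $G=T\wr C_3=M\rtimes C_3$, where $C_3$ is generated by the cyclic coordinate shift $(t_1,t_2,t_3)\mapsto(t_2,t_3,t_1)$, and let $K_1=A\times B\times C$, $K_2=B\times C\times A$, $K_3=C\times A\times B$. Then $K_1\cap K_2\cap K_3=(A\cap B\cap C)^3$ is normalised by $C_3$; $G$ acts transitively on the coset space $\Omega$ of $H=(K_1\cap K_2\cap K_3)\rtimes C_3$, with $M$ a transitive minimal normal subgroup; and for $\omega=H$: (a) $\{K_1,K_2,K_3\}$ is a Cartesian system of subgroups in $M$ with respect to $\omega$ which is not $M$-normal and has $|\mathcal F_i|=3$; (b) $\{(A\cap B\cap C)\times T\times T,\ T\times(A\cap B\cap C)\times T,\ T\times T\times(A\cap B\cap C)\}$ is also a Cartesian system of subgroups in $M$ with respect to $\omega$, and it is $M$-normal.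
   Context: For $G$ innately transitive on $\Omega$ (i.e. with a transitive minimal normal subgroup, a plinth) with plinth $M$ and $\omega\in\Omega$, a Cartesian system of subgroups in $M$ with respect to $\omega$ is a $G_\omega$-conjugation-invariant set $\{K_1,\ldots,K_\ell\}$ of subgroups of $M$ with $\bigcap_i K_i=M_\omega$ and $K_i\bigl(\bigcap_{j\ne i}K_j\bigr)=M$ for all $i$. It is $M$-normal if there are normal subgroups $M_1,\ldots,M_\ell$ of $M$ with $M=M_1\times\cdots\times M_\ell$ and $K_i=(M_i\cap M_\omega)\times\prod_{j\ne i}M_j$ for all $i$. For $M=T_1\times\cdots\times T_k$ with simple factors $T_i$ and projections $\sigma_i:M\to T_i$, $\mathcal F_i=\{\sigma_i(K_j):\sigma_i(K_j)\ne T_i\}$. *)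

From mathcomp Require Import all_boot all_fingroup all_solvable.
Set Implicit Arguments. Unset Strict Implicit. Unset Printing Implicit Defensive.
Import GroupScope.

(* Cartesian systems of subgroups (paper's definition).
   M : the plinth, Gw : the point stabiliser G_omega, Mw : M_omega,
   Ks : the set {K_1,...,K_l} of subgroups of M. *)
Definition cartesian_system (gT : finGroupType) (M Gw Mw : {set gT})
    (Ks : {set {set gT}}) : Prop :=
  [/\ forall K, K \in Ks -> group_set K /\ K \subset M,
      forall g K, g \in Gw -> K \in Ks -> K :^ g \in Ks,
      \bigcap_(K in Ks) K = Mw &
      forall K, K \in Ks -> K * (M :&: \bigcap_(J in Ks | J != K) J) = M].

Definition M_normal (gT : finGroupType) (M Mw : {set gT})
    (Ks : {set {set gT}}) : Prop :=
  exists Mi : {set gT} -> {set gT},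
    [/\ forall K, K \in Ks -> group_set (Mi K) /\ Mi K <| M,
        \big[dprod/1]_(K in Ks) Mi K = M &
        forall K, K \in Ks -> K = (Mi K :&: Mw) * (\prod_(J in Ks | J != K) Mi J)].

Definition cube3 (gT : finGroupType) := (gT * gT * gT)%type.

Definition coord (gT : finGroupType) (i : 'I_3) (p : cube3 gT) : gT :=
  if (val i == 0)%N then p.1.1 else if (val i == 1)%N then p.1.2 else p.2.

(* Faithful copy of T^3 and T wr C_3 inside Sym(T^3): M acts by right
   multiplication (right regular representation rr), and C_3 is generated
   by the coordinate shift (t1,t2,t3) |-> (t2,t3,t1); conjugation by this
   shift induces exactly the shift automorphism on rr(T^3). *)
Notation rr gT := (actperm (@mulgr_action (cube3 gT))).

Definition shift_fun (gT : finGroupType) (p : cube3 gT) : cube3 gT :=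
  (p.1.2, p.2, p.1.1).

Lemma shift_fun_inj (gT : finGroupType) : injective (@shift_fun gT).
Proof.
move=> [[a b] c] [[a' b'] c'] /= [-> -> ->]; by [].
Qed.

Definition shift (gT : finGroupType) : {perm cube3 gT} := perm (@shift_fun_inj gT).

Definition sigma (gT : finGroupType) (i : 'I_3) (K : {set {perm cube3 gT}}) : {set gT} :=
  [set coord i p | p in rr gT @*^-1 K].

Definition Fsys (gT : finGroupType) (T : {set gT}) (i : 'I_3)
    (Ks : {set {set {perm cube3 gT}}}) : {set {set gT}} :=
  [set sigma i K | K in Ks & sigma i K != T].

From mathcomp Require Import all_boot all_fingroup all_solvable.
Import GroupScope.
Set Implicit Arguments. Unset Strict Implicit. Unset Printing Implicit Defensive.

(* Every subgroup involved is the image [box X Y Z] of a product X x Y x Z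
   under the regular embedding of T^3 into Sym(T^3).  Intersections and products
   of boxes are computed coordinatewise and the shift c rotates the coordinates,
   so the factorisations T = A(B :&: C) = B(C :&: A) = C(A :&: B) make
   {A x B x C, B x C x A, C x A x B} a Cartesian system, with
   G_w = H = D^3 C_3 and M_w = D^3 for D = A :&: B :&: C.
   Simplicity of the nonabelian group T enters only through the normal subgroups
   of T^3: if N is normal and x in N has a nontrivial i-th coordinate x_i, the
   commutators [x, t] with t in the i-th factor lie in N and equal [x_i, t] in that
   factor; as Z(T) = 1, the normal subgroup {z in T | z_i in N} of T is all of T.  Hence M is
   minimal normal in G (C_3 permutes the factors transitively), and {K_i} is not
   M-normal: each M_i would lie in some K_j, all of whose coordinates are proper,
   forcing every M_i, hence M, to be trivial. *)

Section ThreeElementSets.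
Variable I : finType.
Implicit Types a b c : I.

Lemma set3_swap a b c : [set a; b; c] = [set a; c; b].
Proof. by apply/setP => x; rewrite !inE; do !case: (_ == _). Qed.

Lemma set3_rot a b c : [set a; b; c] = [set b; c; a].
Proof. by apply/setP => x; rewrite !inE; do !case: (_ == _). Qed.

Lemma big_set3 (R : Type) (idx : R) (op : Monoid.com_law idx) (F : I -> R) a b c :
  a != b -> b != c -> c != a ->
  \big[op/idx]_(i in [set a; b; c]) F i = op (F a) (op (F b) (F c)).
Proof.
move=> ab bc ca; rewrite -setUA big_setU1 ?big_setU1 ?big_set1 //= !inE ?negb_or ?ab //.
by rewrite eq_sym ca.
Qed.

Lemma big_set3_neq (R : Type) (idx : R) (op : Monoid.com_law idx) (F : I -> R) a b c :
  a != b -> b != c -> c != a ->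
  \big[op/idx]_(i in [set a; b; c] | i != a) F i = op (F b) (F c).
Proof.
move=> ab bc ca; rewrite (eq_bigl (mem [set b; c])) => [|i].
  by rewrite big_setU1 ?big_set1 ?inE.
rewrite !inE; case: (eqVneq i a) => [->|_]; rewrite /= ?andbT ?andbF //.
by rewrite (negbTE ab) eq_sym (negbTE ca).
Qed.

Lemma card_imset3 (rT : finType) (f : I -> rT) (P : pred I) a b c :
  P a -> P b -> P c -> f a != f b -> f b != f c -> f c != f a ->
  #|[set f i | i in [set a; b; c] & P i]| = 3.
Proof.
move=> Pa Pb Pc fab fbc fca.
have -> : [set f i | i in [set a; b; c] & P i] = [set f a; f b; f c].
  apply/setP=> y; apply/imsetP/idP => [[i] | ].
    by rewrite !inE -orbA => /andP[/or3P[] /eqP-> _] ->; rewrite eqxx ?orbT.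
  by rewrite !inE -orbA => /or3P[] /eqP->; [exists a | exists b | exists c];
    rewrite // !inE eqxx ?orbT.
by rewrite -setUA cardsU1 cards2 !inE negb_or fab eq_sym fca fbc.
Qed.
End ThreeElementSets.

Section CartesianSystems.
Variable rT : finGroupType.

Lemma prodg_sub (I : finType) (P : pred I) (F : I -> {set rT}) j :
  (forall i, P i -> 1 \in F i) -> P j -> F j \subset \prod_(i | P i) F i.
Proof.
move=> F1 Pj; apply/subsetP => y Fy.
have <- : \prod_(i | P i) (if i == j then y else 1) = y.
  by rewrite (big_only1 _ Pj) ?eqxx // => i /negbTE->.
by apply: mem_prodg => i Pi; case: eqP => [->|_]; rewrite ?F1.
Qed.

Lemma conj_stable (Ks : {set {set rT}}) (N Gw : {set rT}) (x : rT) :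
  Gw \subset N * <[x]> -> (forall K, K \in Ks -> N \subset 'N(K)) ->
  (forall K, K \in Ks -> K :^ x \in Ks) ->
  forall g K, g \in Gw -> K \in Ks -> K :^ g \in Ks.
Proof.
move=> sGw nKs xKs _ K /(subsetP sGw)/mulsgP[n _ Nn /cycleP[k ->] ->] Ks_K.
rewrite conjsgM (normsP (nKs K Ks_K) n Nn).
by elim: k => [|k IHk]; rewrite ?conjsg1 // expgSr conjsgM xKs.
Qed.

Lemma cartesian_system3 (M Gw Mw : {set rT}) (K1 K2 K3 : {group rT}) :
  K1 :!=: K2 -> K2 :!=: K3 -> K3 :!=: K1 ->
  K1 \subset M -> K2 \subset M -> K3 \subset M ->
  (forall g K, g \in Gw -> K \in [set gval K1; gval K2; gval K3] ->
     K :^ g \in [set gval K1; gval K2; gval K3]) ->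
  K1 :&: K2 :&: K3 = Mw ->
  K1 * (K2 :&: K3) = M -> K2 * (K3 :&: K1) = M -> K3 * (K1 :&: K2) = M ->
  cartesian_system M Gw Mw [set gval K1; gval K2; gval K3].
Proof.
move=> n12 n23 n31 sK1 sK2 sK3 KsG capK f1 f2 f3.
split=> // [K | | K].
- by rewrite !inE -orbA => /or3P[] /eqP->; split; rewrite ?groupP.
- by rewrite big_set3 //= setIA.
rewrite !inE -orbA => /or3P[] /eqP->.
- by rewrite big_set3_neq // (setIidPr _) // subIset ?sK2.
- by rewrite set3_rot big_set3_neq // (setIidPr _) // subIset ?sK3.
- by rewrite -set3_rot big_set3_neq // (setIidPr _) // subIset ?sK1.
Qed.
End CartesianSystems.

Section Cube.
Variable gT : finGroupType.
Implicit Types (X Y Z : {set gT}) (x : cube3 gT) (i : 'I_3).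
Local Notation cube X Y Z := (setX (setX X Y) Z).
Local Notation box X Y Z := (rr gT @* cube X Y Z).
Local Notation sf := (@shift_fun gT).
Local Notation c := (shift gT).

Lemma mul3 (a b d a' b' d' : gT) :
  ((a, b), d) * ((a', b'), d') = ((a * a', b * b'), d * d') :> cube3 gT.
Proof. by []. Qed.

Lemma inv3 (a b d : gT) : ((a, b), d)^-1 = ((a^-1, b^-1), d^-1) :> cube3 gT.
Proof. by []. Qed.

Lemma conj3 (a b d a' b' d' : gT) :
  ((a, b), d) ^ ((a', b'), d') = ((a ^ a', b ^ b'), d ^ d') :> cube3 gT.
Proof. by []. Qed.

Lemma in_cube X Y Z x :
  (x \in cube X Y Z) = [&& x.1.1 \in X, x.1.2 \in Y & x.2 \in Z].
Proof. by case: x => [[a b] d]; rewrite !in_setX andbA. Qed.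

Lemma cubeI X Y Z X' Y' Z' :
  cube X Y Z :&: cube X' Y' Z' = cube (X :&: X') (Y :&: Y') (Z :&: Z').
Proof. by apply/setP=> x; rewrite inE !in_cube !inE; do !case: (_ \in _). Qed.

Lemma cubeM X Y Z X' Y' Z' :
  cube X Y Z * cube X' Y' Z' = cube (X * X') (Y * Y') (Z * Z').
Proof.
apply/setP=> x; apply/mulsgP/idP => [[u v] | ].
  by rewrite !in_cube => /and3P[? ? ?] /and3P[? ? ?] ->; rewrite !mem_mulg.
rewrite in_cube => /and3P[/mulsgP[a1 b1 ? ? e1] /mulsgP[a2 b2 ? ? e2] /mulsgP[a3 b3 ? ? e3]].
exists ((a1, a2), a3) ((b1, b2), b3); rewrite ?in_cube ?mul3 /=; try by apply/and3P.
by case: x e1 e2 e3 => [[? ?] ?] /= -> -> ->.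
Qed.

Lemma cube1 : cube 1 1 1 = 1 :> {set cube3 gT}.
Proof.
apply/setP=> -[[a b] d]; rewrite in_cube !inE /=.
by apply/and3P/eqP => [[/eqP-> /eqP-> /eqP->] | [-> -> ->]].
Qed.

Lemma cents_cube X Y Z X' Y' Z' :
  X \subset 'C(X') -> Y \subset 'C(Y') -> Z \subset 'C(Z') ->
  cube X Y Z \subset 'C(cube X' Y' Z').
Proof.
move=> /centsP cX /centsP cY /centsP cZ; apply/centsP => -[[a b] d] + [[a' b'] d'].
rewrite !in_cube /= => /and3P[? ? ?] /and3P[? ? ?].
by rewrite /commute !mul3 (cX a) ?(cY b) ?(cZ d).
Qed.

Lemma normal_cube (T X Y Z : {group gT}) :
  X <| T -> Y <| T -> Z <| T -> cube X Y Z <| cube T T T.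
Proof.
move=> /andP[sXT nXT] /andP[sYT nYT] /andP[sZT nZT].
rewrite /normal !setXS //=; apply/subsetP => -[[a b] d].
rewrite in_cube /= => /and3P[Ta Tb Td]; rewrite inE; apply/subsetP => _ /imsetP[y Xy ->].
case: y Xy => [[p q] r]; rewrite in_cube /= => /and3P[Xp Yq Zr].
by rewrite conj3 in_cube /= !memJ_norm ?Xp ?Yq ?Zr ?(subsetP nXT) ?(subsetP nYT) ?(subsetP nZT).
Qed.

Lemma cube_inj (X Y Z X' Y' Z' : {group gT}) :
  cube X Y Z = cube X' Y' Z' -> [/\ X :=: X', Y :=: Y' & Z :=: Z'].
Proof.
move=> eXYZ; have e x : x \in cube X Y Z = (x \in cube X' Y' Z') by rewrite eXYZ.
split; apply/setP=> z.
- by have := e ((z, 1), 1); rewrite !in_cube /= !group1 !andbT.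
- by have := e ((1, z), 1); rewrite !in_cube /= !group1 /= !andbT.
- by have := e ((1, 1), z); rewrite !in_cube /= !group1.
Qed.

Lemma shift_cube X Y Z : sf @: cube X Y Z = cube Y Z X.
Proof.
apply/setP => -[[a b] d]; apply/imsetP/idP => [[[[p q] r]] | ].
  by rewrite !in_cube /= => /and3P[? ? ?] [-> -> ->]; apply/and3P.
by rewrite in_cube => /and3P[? ? ?]; exists ((d, a), b); rewrite ?in_cube //; apply/and3P.
Qed.

Lemma rrE x p : rr gT x p = p * x.
Proof. by rewrite actpermE. Qed.

Lemma injm_rr : 'injm (rr gT).
Proof.
apply/injmP=> x y _ _ /(congr1 (fun s : {perm _} => s 1)).
by rewrite !rrE !mul1g.
Qed.

Lemma shift_morphM : {morph sf : x y / x * y}.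
Proof. by move=> [[? ?] ?] [[? ?] ?]. Qed.

Lemma rr_conj_shift x : rr gT x ^ c = rr gT (sf x).
Proof.
apply/permP=> p; rewrite /conjg !permM rrE -{2}(permKV c p).
by rewrite !permE shift_morphM.
Qed.

Lemma box_conj_shift X Y Z : box X Y Z :^ c = box Y Z X.
Proof.
rewrite -(shift_cube X Y Z) !morphimEsub ?subsetT // /conjugate -!imset_comp.
by apply: eq_imset => x; apply: rr_conj_shift.
Qed.

Lemma boxI X Y Z X' Y' Z' :
  box X Y Z :&: box X' Y' Z' = box (X :&: X') (Y :&: Y') (Z :&: Z').
Proof. by rewrite -injmI ?injm_rr ?subsetT // cubeI. Qed.

Lemma boxM X Y Z X' Y' Z' :
  box X Y Z * box X' Y' Z' = box (X * X') (Y * Y') (Z * Z').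
Proof. by rewrite -morphimMl ?subsetT // cubeM. Qed.

Lemma boxS X Y Z X' Y' Z' :
  X \subset X' -> Y \subset Y' -> Z \subset Z' -> box X Y Z \subset box X' Y' Z'.
Proof. by move=> sX sY sZ; rewrite morphimS ?setXS. Qed.

Lemma box_inj (X Y Z X' Y' Z' : {group gT}) :
  box X Y Z = box X' Y' Z' -> [/\ X :=: X', Y :=: Y' & Z :=: Z'].
Proof. by move/eqP; rewrite injm_eq ?injm_rr ?subsetT // => /eqP/cube_inj. Qed.

Lemma box_cprod (X Y Z X' Y' Z' : {group gT}) :
  X' \subset 'C(X) -> Y' \subset 'C(Y) -> Z' \subset 'C(Z) ->
  box X Y Z \* box X' Y' Z' = box (X * X') (Y * Y') (Z * Z').
Proof. by move=> cX cY cZ; rewrite cprodE ?morphim_cents ?cents_cube ?boxM. Qed.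

Lemma box_dprod (X Y Z X' Y' Z' : {group gT}) :
  X' \subset 'C(X) -> Y' \subset 'C(Y) -> Z' \subset 'C(Z) ->
  X :&: X' = 1 -> Y :&: Y' = 1 -> Z :&: Z' = 1 ->
  box X Y Z \x box X' Y' Z' = box (X * X') (Y * Y') (Z * Z').
Proof.
move=> cX cY cZ tiX tiY tiZ.
by rewrite dprodEcp ?box_cprod // boxI tiX tiY tiZ cube1 morphim1.
Qed.

Lemma normal_box (T X Y Z : {group gT}) :
  X <| T -> Y <| T -> Z <| T -> box X Y Z <| box T T T.
Proof. by move=> nX nY nZ; rewrite morphim_normal ?normal_cube. Qed.

Lemma box_meet_shift_cycle (X Y Z : {group gT}) : box X Y Z :&: <[c]> = 1.
Proof.
apply/trivgP/subsetP => _ /setIP[/morphimP[x _ _ ->] /cycleP[n xn]].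
have: rr gT x 1 = 1 by rewrite xn permX_fix // permE.
by rewrite rrE mul1g => ->; rewrite morph1 inE.
Qed.

Lemma sigmaS i (K L : {set {perm cube3 gT}}) : K \subset L -> sigma i K \subset sigma i L.
Proof. by move=> sKL; rewrite imsetS ?morphpreS. Qed.

Lemma sigma_box i (X Y Z : {group gT}) :
  sigma i (box X Y Z) = if (val i == 0)%N then gval X else if (val i == 1)%N then gval Y else gval Z.
Proof.
rewrite /sigma injmK ?injm_rr ?subsetT //.
case: i => -[|[|[|//]]] Hi /=; apply/setP=> z; apply/imsetP/idP => [[x] | Xz].
- by rewrite in_cube /coord /= => /and3P[? _ _] ->.
- by exists ((z, 1), 1); rewrite ?in_cube /= ?Xz ?group1.
- by rewrite in_cube /coord /= => /and3P[_ ? _] ->.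
- by exists ((1, z), 1); rewrite ?in_cube /= ?Xz ?group1.
- by rewrite in_cube /coord /= => /and3P[_ _ ?] ->.
- by exists ((1, 1), z); rewrite ?in_cube /= ?Xz ?group1.
Qed.

Definition unit3 i (z : gT) : cube3 gT :=
  if (val i == 0)%N then ((z, 1), 1) else if (val i == 1)%N then ((1, z), 1) else ((1, 1), z).

Lemma unit3M i : {morph unit3 i : z w / z * w}.
Proof. by case: i => -[|[|[|//]]] Hi z w; rewrite /unit3 /= mul3 mulg1. Qed.

Canonical unit3_morphism i := @Morphism _ _ setT (unit3 i) (in2W (unit3M i)).

Lemma coord_unit3 i z : coord i (unit3 i z) = z.
Proof. by case: i => -[|[|[|//]]]. Qed.

Lemma commg_unit3 i x t : [~ x, unit3 i t] = unit3 i [~ coord i x, t].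
Proof.
case: x => [[a b] d]; case: i => -[|[|[|//]]] Hi;
by rewrite /unit3 /commg /conjg /= !inv3 !mul3 /= ?invg1 ?mulg1 ?mul1g ?mulVg.
Qed.

Lemma unit3_cube (X : {group gT}) i z : z \in X -> unit3 i z \in cube X X X.
Proof. by case: i => -[|[|[|//]]] Hi Xz; rewrite in_cube /= Xz !group1. Qed.

Lemma coord_cube X i x : x \in cube X X X -> coord i x \in X.
Proof. by rewrite in_cube => /and3P[? ? ?]; case: i => -[|[|[|//]]]. Qed.

Lemma coord_eq1 x : (forall i, coord i x = 1) -> x = 1.
Proof.
case: x => [[a b] d] x1.
by move: (x1 ord0) (x1 (@Ordinal 3 1 isT)) (x1 ord_max); rewrite /coord /= => -> -> ->.
Qed.

Section SimpleCube.
Variable T : {group gT}.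
Hypotheses (simT : simple T) (nabT : ~~ abelian T).

Lemma center_simple_nonabelian : 'Z(T) = 1.
Proof.
case/simpleP: simT => _ /(_ _ (center_normal T)) [//| ZT].
by case/negP: nabT; rewrite -ZT center_abelian.
Qed.

Lemma normal_cube_unit3 (N : {group cube3 gT}) i x :
  N <| cube T T T -> x \in N -> coord i x != 1 -> unit3 i @: T \subset N.
Proof.
move=> /andP[sNT nNT] Nx xi1.
have nST : T :&: unit3 i @*^-1 N <| T.
  rewrite /normal subsetIl normsI ?normG // (subset_trans _ (morphpre_norms _ nNT)) //.
  by apply/subsetP=> z Tz; apply/morphpreP; rewrite in_setT unit3_cube.
have Txi : coord i x \in T by apply: coord_cube; apply: (subsetP sNT).
case/simpleP: simT => _ /(_ _ nST) [S1 | ST].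
  suff: coord i x \in 'Z(T) by rewrite center_simple_nonabelian inE (negbTE xi1).
  rewrite inE Txi /=; apply/centP => t Tt; apply/commgP.
  suff: [~ coord i x, t] \in T :&: unit3 i @*^-1 N by rewrite S1 inE.
  rewrite !inE groupR //= -commg_unit3 commgEl groupM ?groupV //.
  by rewrite memJ_norm // (subsetP nNT) ?unit3_cube.
apply/subsetP => _ /imsetP[z Tz ->].
by move: Tz; rewrite -ST !inE => /andP[_].
Qed.

Lemma normal_cube_trivial (N : {group cube3 gT}) :
  N <| cube T T T -> (forall i, ~~ (T \subset coord i @: N)) -> N :=: 1.
Proof.
move=> nN nTN; apply/trivgP/subsetP => x Nx; rewrite inE; apply/eqP/coord_eq1 => i.
apply/eqP; apply: contraNT (nTN i) => xi1; apply/subsetP => z Tz.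
by rewrite -(coord_unit3 i z) imset_f // (subsetP (normal_cube_unit3 nN Nx xi1)) ?imset_f.
Qed.

Lemma normal_cube_full (N : {group cube3 gT}) :
  N <| cube T T T -> N :!=: 1 -> {in N, forall x, sf x \in N} -> N :=: cube T T T.
Proof.
move=> nN ntN sfN; apply/eqP; rewrite eqEsubset normal_sub //=.
have [y Ny y1] : exists2 y, y \in N & coord ord0 y != 1.
  have [[[p q] r] Nx x1] := trivgPn _ ntN.
  have [p1|] := eqVneq p 1; last by exists ((p, q), r).
  have [q1|] := eqVneq q 1; last by exists (sf ((p, q), r)); rewrite ?sfN.
  have [r1|] := eqVneq r 1; last by exists (sf (sf ((p, q), r))); rewrite ?sfN.
  by case/eqP: x1; rewrite p1 q1 r1.
have N1 z : z \in T -> ((z, 1), 1) \in N.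
  by move=> Tz; rewrite (subsetP (normal_cube_unit3 nN Ny y1)) ?(imset_f (unit3 ord0)).
apply/subsetP => -[[p q] r]; rewrite in_cube /= => /and3P[Tp Tq Tr].
have -> : ((p, q), r) = ((p, 1), 1) * sf (sf ((q, 1), 1)) * sf ((r, 1), 1).
  by rewrite !mul3 !mulg1 !mul1g.
by rewrite !groupM ?sfN ?N1.
Qed.

Lemma normal_box_pullback (N : {set {perm cube3 gT}}) (X Y Z : {group gT}) :
  N <| box X Y Z -> rr gT @*^-1 N <| cube X Y Z.
Proof.
have sB : box X Y Z \subset rr gT @* setT by rewrite morphimS ?subsetT.
move=> nN; rewrite -(injmK injm_rr (subsetT (cube X Y Z))) morphpre_normal //.
exact: subset_trans (normal_sub nN) sB.
Qed.

Lemma normal_box_trivial (N : {group {perm cube3 gT}}) (X Y Z : {group gT}) :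
  N <| box T T T -> N \subset box X Y Z ->
  X \proper T -> Y \proper T -> Z \proper T -> N :=: 1.
Proof.
move=> nN sNXYZ pX pY pZ; have sN : N \subset rr gT @* setT.
  by rewrite (subset_trans sNXYZ) ?morphimS ?subsetT.
have nsT (W : {group gT}) : W \proper T -> ~~ (T \subset W) by rewrite properE => /andP[].
rewrite -(morphpreK sN) (normal_cube_trivial (normal_box_pullback nN)) ?morphim1 // => i.
apply/negP => sTN; have := subset_trans sTN (sigmaS i sNXYZ).
by rewrite sigma_box; case: i {sTN} => -[|[|[|//]]] Hi /=; apply/negP; apply: nsT.
Qed.

Lemma normal_box_full (N : {group {perm cube3 gT}}) :
  N <| box T T T -> N :!=: 1 -> c \in 'N(N) -> N :=: box T T T.
Proof.
move=> nN ntN cN; have sN : N \subset rr gT @* setT.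
  by rewrite (subset_trans (normal_sub nN)) ?morphimS ?subsetT.
rewrite -(morphpreK sN) (normal_cube_full (normal_box_pullback nN)) //.
  by apply: contra ntN => /eqP N1; rewrite -(morphpreK sN) N1 morphim1.
by move=> x; rewrite !inE /= -rr_conj_shift memJ_norm.
Qed.
End SimpleCube.

Lemma cycle_shift_norm_box X : <[c]> \subset 'N(box X X X).
Proof. by rewrite cycle_subG; apply/normP; rewrite box_conj_shift. Qed.

Lemma box_eq1 (X : {group gT}) : (box X X X == 1) = (X :==: 1).
Proof.
rewrite morphim_injm_eq1 ?injm_rr ?subsetT //; apply/eqP/eqP => [|->]; last exact: cube1.
by rewrite -cube1 => /cube_inj[].
Qed.
Lemma box_rot_neq (X Y Z : {group gT}) :
  (X :!=: Y) || (Y :!=: Z) -> box X Y Z != box Y Z X.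
Proof. by apply: contraL => /eqP/box_inj[-> ->]; rewrite !eqxx. Qed.
End Cube.

Section WreathExample.
Variables (gT : finGroupType) (T A B C : {group gT}).
Hypotheses (simT : simple T) (nabT : ~~ abelian T).
Hypotheses (pA : A \proper T) (pB : B \proper T) (pC : C \proper T).
Hypotheses (nAB : A :!=: B) (nBC : B :!=: C) (nCA : C :!=: A).
Hypotheses (fA : T :=: A * (B :&: C)) (fB : T :=: B * (C :&: A)) (fC : T :=: C * (A :&: B)).

Local Notation box X Y Z := (rr gT @* setX (setX X Y) Z).
Local Notation c := (shift gT).
Local Notation C3 := <[c]>.
Local Notation M := (box T T T).
Local Notation G := (M <*> C3).
Local Notation D := (A :&: B :&: C).
Local Notation H := ((box A B C :&: box B C A :&: box C A B) <*> C3).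
Local Notation Gw := 'C_G[H | 'Rs].
Local Notation Mw := 'C_M[H | 'Rs].

Lemma proper_D : D \proper T.
Proof. by rewrite (sub_proper_trans _ pA) // -setIA subsetIl. Qed.

Lemma sDT : D \subset T.
Proof. exact: proper_sub proper_D. Qed.

Lemma capK : box A B C :&: box B C A :&: box C A B = box D D D.
Proof.
have DBCA : B :&: C :&: A = D by rewrite setIC setIA.
have DCAB : C :&: A :&: B = D by rewrite -setIA setIC.
by rewrite !boxI DBCA DCAB.
Qed.

Lemma H_eq : H = box D D D * C3.
Proof. by rewrite capK norm_joinEr ?cycle_shift_norm_box. Qed.

Lemma G_eq : G = M * C3.
Proof. by rewrite norm_joinEr ?cycle_shift_norm_box. Qed.

Lemma Gw_eq : Gw = H.
Proof. by rewrite astab1Rs /=; apply/setIidPr; rewrite H_eq G_eq mulSg ?boxS ?sDT. Qed.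

Lemma Mw_eq : Mw = box D D D.
Proof.
rewrite astab1Rs /= H_eq [M :&: _]setIC -group_modl ?boxS ?sDT //.
by rewrite [C3 :&: _]setIC box_meet_shift_cycle mulg1.
Qed.

Lemma normal_M : M <| G.
Proof. by rewrite /normal joing_subl join_subG normG cycle_shift_norm_box. Qed.

Lemma minnormal_M : minnormal M G.
Proof.
apply/mingroupP; split=> [|N /andP[ntN nNG] sNM].
  by rewrite box_eq1 (normal_norm normal_M) andbT; case/simpleP: simT.
apply: normal_box_full => //; last first.
  by rewrite (subsetP nNG) // (subsetP (joing_subr _ _)) ?cycle_id.
by rewrite /normal sNM (subset_trans (joing_subl _ _) nNG).
Qed.

Lemma rcosets_H_M : rcosets H G = rcosets H M.
Proof.
apply/setP => X; apply/rcosetsP/rcosetsP => [[g] | [m Mm ->]]; last first.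
  by exists m; rewrite ?(subsetP (joing_subl _ _)).
rewrite G_eq -(normC (cycle_shift_norm_box _)) => /mulsgP[k m C3k Mm ->] ->.
by exists m; rewrite // rcosetM rcoset_id //= H_eq -[k]mul1g mem_mulg ?group1.
Qed.

Lemma conj_stable_box_rot (X Y Z : {group gT}) :
  D \subset X -> D \subset Y -> D \subset Z ->
  forall g K, g \in Gw -> K \in [set box X Y Z; box Y Z X; box Z X Y] ->
    K :^ g \in [set box X Y Z; box Y Z X; box Z X Y].
Proof.
move=> sDX sDY sDZ; apply: (conj_stable (N := box D D D)).
- by rewrite Gw_eq H_eq.
- by move=> K; rewrite !inE -orbA => /or3P[] /eqP->; rewrite (subset_trans _ (normG _)) ?boxS.
by move=> K; rewrite !inE -orbA => /or3P[] /eqP->; rewrite box_conj_shift eqxx ?orbT.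
Qed.

Lemma cartesian_system_box_rot (X Y Z : {group gT}) :
  (X :!=: Y) || (Y :!=: Z) -> X :&: Y :&: Z = D ->
  X * (Y :&: Z) = T -> Y * (Z :&: X) = T -> Z * (X :&: Y) = T ->
  cartesian_system M Gw Mw [set box X Y Z; box Y Z X; box Z X Y].
Proof.
move=> nXYZ capXYZ fX fY fZ.
have nYZX : (Y :!=: Z) || (Z :!=: X).
  by apply: contraLR nXYZ; rewrite negb_or !negbK => /andP[/eqP-> /eqP->]; rewrite eqxx.
have nZXY : (Z :!=: X) || (X :!=: Y).
  by apply: contraLR nXYZ; rewrite negb_or !negbK => /andP[/eqP-> /eqP->]; rewrite eqxx.
have DYZX : Y :&: Z :&: X = D by rewrite -capXYZ setIC setIA.
have DZXY : Z :&: X :&: Y = D by rewrite -capXYZ -setIA setIC.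
have sDX : D \subset X by rewrite -capXYZ -setIA subsetIl.
have sDY : D \subset Y by rewrite -DYZX -setIA subsetIl.
have sDZ : D \subset Z by rewrite -DZXY -setIA subsetIl.
have sXT : X \subset T by rewrite -fX mulG_subl.
have sYT : Y \subset T by rewrite -fY mulG_subl.
have sZT : Z \subset T by rewrite -fZ mulG_subl.
apply: (cartesian_system3 _ _ _ _ _ _ (conj_stable_box_rot sDX sDY sDZ));
  rewrite ?box_rot_neq ?boxS ?Mw_eq ?boxI ?boxM ?capXYZ ?DYZX ?DZXY ?fX ?fY ?fZ //.
Qed.

Lemma cartesian_system_K : cartesian_system M Gw Mw [set box A B C; box B C A; box C A B].
Proof. by apply: cartesian_system_box_rot; rewrite ?nAB. Qed.

Lemma cartesian_system_L : cartesian_system M Gw Mw [set box D T T; box T D T; box T T D].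
Proof.
rewrite set3_swap; apply: cartesian_system_box_rot.
- by rewrite (proper_neq proper_D).
- by rewrite -setIA setIid (setIidPl sDT).
- by rewrite setIid mulSGid ?sDT.
- by rewrite (setIidPr sDT) mulGSid ?sDT.
- by rewrite (setIidPl sDT) mulGSid ?sDT.
Qed.

Lemma not_M_normal_K : ~ M_normal M Mw [set box A B C; box B C A; box C A B].
Proof.
set Ks := [set _; _; _]; case=> Mi [nMi dprodM KMi].
have Mi1 K (X Y Z : {group gT}) : K \in Ks -> box X Y Z \in Ks -> box X Y Z != K ->
    X \proper T -> Y \proper T -> Z \proper T -> Mi K = 1.
  move=> KsK KsJ nJK pX pY pZ; have [gK nK] := nMi K KsK.
  apply: (normal_box_trivial simT nabT (N := Group gK) nK _ pX pY pZ).
  have Mi_1 L : L \in Ks -> 1 \in Mi L by case/nMi => /group_setP[].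
  rewrite (KMi _ KsJ); apply: subset_trans (mulg_subr _ _); last first.
    by rewrite inE Mi_1 // Mw_eq group1.
  by apply: (@prodg_sub _ _ _ Mi K) => [L /andP[/Mi_1] // | ]; rewrite KsK eq_sym.
have: M = 1.
  rewrite -dprodM big1 // => K; rewrite !inE -orbA => /or3P[] /eqP->.
  - by apply: (Mi1 _ B C A); rewrite ?inE ?eqxx ?orbT // eq_sym box_rot_neq ?nAB.
  - by apply: (Mi1 _ C A B); rewrite ?inE ?eqxx ?orbT // eq_sym box_rot_neq ?nBC.
  - by apply: (Mi1 _ A B C); rewrite ?inE ?eqxx ?orbT // eq_sym box_rot_neq ?nCA.
by move/eqP; rewrite box_eq1; case/simpleP: simT => /negP.
Qed.

Lemma card_Fsys_K i : #|Fsys T i [set box A B C; box B C A; box C A B]| = 3.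
Proof.
apply: card_imset3; rewrite !sigma_box;
  by case: i => -[|[|[|//]]] Hi /=; rewrite ?(proper_neq pA) ?(proper_neq pB) ?(proper_neq pC).
Qed.

Lemma M_normal_L : M_normal M Mw [set box D T T; box T D T; box T T D].
Proof.
have nTD : T :!=: D by rewrite eq_sym proper_neq ?proper_D.
have nL12 : box D T T != box T D T by apply: contraNneq nTD => /box_inj[_ /eqP].
have nL23 : box T D T != box T T D by apply: contraNneq nTD => /box_inj[_ _ /eqP].
have nL31 : box T T D != box D T T by apply: contraNneq nTD => /box_inj[/eqP].
pose Mi K := if K == box D T T then box T 1 1 else if K == box T D T then box 1 T 1 else box 1 1 T.
have [M1 M2 M3] : [/\ Mi (box D T T) = box T 1 1, Mi (box T D T) = box 1 T 1
                    & Mi (box T T D) = box 1 1 T].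
  by split; rewrite /Mi ?eqxx ?(ifN_eqC _ _ nL12) ?(ifN_eq _ _ nL31) ?(ifN_eqC _ _ nL23).
exists Mi; split.
- move=> K; rewrite !inE -orbA => /or3P[] /eqP->; rewrite ?M1 ?M2 ?M3;
    by split; rewrite ?groupP ?normal_box ?normal_refl ?normal1.
- rewrite big_set3 //= M1 M2 M3 box_dprod ?cents1 ?sub1G ?setI1g ?setIg1 // !mulg1 !mul1g.
  by rewrite box_dprod ?cents1 ?sub1G ?setI1g ?setIg1 // !mulg1 !mul1g.
move=> K; rewrite !inE -orbA Mw_eq => /or3P[] /eqP->.
- rewrite (bigcprodW (_ : _ = box 1 T T)); last first.
    by rewrite big_set3_neq //= M2 M3 box_cprod ?cents1 ?sub1G ?mulg1 ?mul1g.
  by rewrite M1 boxI boxM (setIidPr sDT) !setI1g !mul1g !mulg1.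
- rewrite (bigcprodW (_ : _ = box T 1 T)); last first.
    by rewrite set3_rot big_set3_neq //= M3 M1 box_cprod ?cents1 ?sub1G ?mulg1 ?mul1g.
  by rewrite M2 boxI boxM (setIidPr sDT) !setI1g !mul1g !mulg1.
- rewrite (bigcprodW (_ : _ = box T T 1)); last first.
    by rewrite -set3_rot big_set3_neq //= M1 M2 box_cprod ?cents1 ?sub1G ?mulg1 ?mul1g.
  by rewrite M3 boxI boxM (setIidPr sDT) !setI1g !mul1g !mulg1.
Qed.
End WreathExample.

Theorem mainTheorem12 (gT : finGroupType) (T A B C : {group gT}) :
  simple T -> ~~ abelian T ->
  A \proper T -> B \proper T -> C \proper T ->
  A :!=: B -> B :!=: C -> C :!=: A ->
  T :=: A * (B :&: C) -> T :=: B * (C :&: A) -> T :=: C * (A :&: B) ->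
  let M := rr gT @* setX (setX T T) T in
  let c := shift gT in
  let C3 := <[c]> in
  let G := M <*> C3 in
  let K1 := rr gT @* setX (setX A B) C in
  let K2 := rr gT @* setX (setX B C) A in
  let K3 := rr gT @* setX (setX C A) B in
  let D := A :&: B :&: C in
  let H := (K1 :&: K2 :&: K3) <*> C3 in
  let Omega := rcosets H G in
  let Gw := 'C_G[H | 'Rs] in
  let Mw := 'C_M[H | 'Rs] in
  let L1 := rr gT @* setX (setX D T) T in
  let L2 := rr gT @* setX (setX T D) T in
  let L3 := rr gT @* setX (setX T T) D in
  [/\ K1 :&: K2 :&: K3 = rr gT @* setX (setX D D) D /\ C3 \subset 'N(K1 :&: K2 :&: K3),
      [/\ H \in Omega, [transitive G, on Omega | 'Rs], M <| G, minnormal M G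
        & [transitive M, on Omega | 'Rs]],
      [/\ cartesian_system M Gw Mw [set K1; K2; K3],
          ~ M_normal M Mw [set K1; K2; K3]
        & forall i : 'I_3, #|Fsys T i [set K1; K2; K3]| = 3]
    & cartesian_system M Gw Mw [set L1; L2; L3] /\ M_normal M Mw [set L1; L2; L3]].
Proof.
move=> simT nabT pA pB pC nAB nBC nCA fA fB fC /=.
split.
- by rewrite capK cycle_shift_norm_box.
- split; [ | exact: transRs_rcosets | exact: normal_M | exact: minnormal_M | ].
    by apply/rcosetsP; exists 1; rewrite ?group1 ?rcoset1.
  by rewrite rcosets_H_M transRs_rcosets.
- by split; [exact: cartesian_system_K | exact: not_M_normal_K | exact: card_Fsys_K].
by split; [exact: cartesian_system_L | exact: M_normal_L].
Qed.
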